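(* If $G=(U,E)$ is a path, then there exists a category system $\mathcal S\subset 2^U$ such that $(G,\mathcal S)$ is shattered and internally connected and $\operatorname{memdim}(\mathcal S)=\operatorname{diam}(G)$.
   Context: For $u\in U$ let $\mathrm{cat}(u)=\{C\in\mathcal S: u\in C\}$; $\operatorname{memdim}(\mathcal S)=\max_{u\in U}|\mathrm{cat}(u)|$. $\operatorname{diam}(G)$ is the maximum shortest-path distance between two vertices of $G$. $N(s)$ is the neighbor set of $s$. $(G,\mathcal S)$ is internally connected if for every $C\in\mathcal S$ the subgraph of $G$ induced by $C$ is connected. $(G,\mathcal S)$ is shattered if for all $s\neq t$ in $U$ there exist $u\in N(s)$ and $C\in\mathcal S$ with $u,t\in C$ and $s\notin C$ (possibly $u=t$). *)

From mathcomp Require Import all_boot.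
Set Implicit Arguments.
Unset Strict Implicit.
Unset Printing Implicit Defensive.

Section Graphs.
Variable T : finType.
Variable e : rel T.

Definition is_path_graph : Prop :=
  0 < #|T| /\
  exists f : 'I_#|T| -> T, bijective f /\
    forall i j : 'I_#|T|, e (f i) (f j) = (i.+1 == j) || (j.+1 == i).

Definition walkb (x y : T) (n : nat) : bool :=
  [exists p : n.-tuple T, path e x p && (last x p == y)].

(* shortest-path distance; a shortest walk in a connected graph has
   fewer than #|T| edges; the value #|T| stands for "infinity". *)
Definition dist (x y : T) : nat :=
  \big[minn/#|T|]_(n < #|T| | walkb x y n) n.

Definition diam : nat := \max_(x : T) \max_(y : T) dist x y.

Definition nbhd (s : T) : {set T} := [set u | e s u].

Definition cat (S : {set {set T}}) (u : T) : {set {set T}} :=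
  [set C in S | u \in C].
Definition memdim (S : {set {set T}}) : nat := \max_(u : T) #|cat S u|.

Definition induced_connected (C : {set T}) : Prop :=
  forall x y, x \in C -> y \in C ->
    connect (fun a b => [&& e a b, a \in C & b \in C]) x y.

Definition internally_connected (S : {set {set T}}) : Prop :=
  forall C, C \in S -> induced_connected C.

Definition shattered (S : {set {set T}}) : Prop :=
  forall s t : T, s != t ->
    exists u : T, exists C : {set T},
      [/\ u \in nbhd s, C \in S, u \in C, t \in C & s \notin C].
End Graphs.

From Pilot Require Import Defs.
From mathcomp Require Import all_boot.
From mathcomp Require Import zify.

Set Implicit Arguments.
Unset Strict Implicit.
Unset Printing Implicit Defensive.

(* Number the path v_0, ..., v_(n-1). For each of the n-1 edges v_k v_(k+1),
   put both sides of the cut {v_0..v_k} | {v_(k+1)..v_(n-1)} into S. Every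
   side is a subpath, hence connected; every vertex lies in exactly one side
   of each cut, so memdim S = n-1, the diameter of the path; and for s != t,
   the side of the cut next to s that contains t is reached from the
   neighbour of s in the direction of t. *)

Lemma bigmin_le (I : eqType) (r : seq I) (P : pred I) (F : I -> nat) a i :
  i \in r -> P i -> \big[minn/a]_(j <- r | P j) F j <= F i.
Proof.
elim: r => [|x r IH] //; rewrite in_cons big_cons => /orP [/eqP <-|ri] Pi.
  by rewrite Pi geq_minl.
case: (P x); last exact: IH.
exact: leq_trans (geq_minr _ _) (IH ri Pi).
Qed.

Section PathGraph.
Variables (T : finType) (e : rel T).
Let n := #|T|.
Hypothesis n_gt0 : 0 < n.
Variables (v : 'I_n -> T) (idx : T -> 'I_n).
Hypotheses (vK : cancel v idx) (idxK : cancel idx v).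
Hypothesis adj_v : forall i j : 'I_n, e (v i) (v j) = (i.+1 == j) || (j.+1 == i).

Definition pos (x : T) : nat := idx x.
Definition vtx (k : nat) : T := v (insubd (Ordinal n_gt0) k).

Lemma pos_lt x : pos x < n.
Proof. exact: ltn_ord. Qed.

Lemma pos_vtx k : k < n -> pos (vtx k) = k.
Proof. by move=> lt_kn; rewrite /pos /vtx vK val_insubd lt_kn. Qed.

Lemma vtx_pos x : vtx (pos x) = x.
Proof.
by rewrite /vtx -{2}(idxK x); congr v; apply: val_inj; rewrite val_insubd ltn_ord.
Qed.

Lemma pos_inj : injective pos.
Proof. by move=> x y eq_xy; rewrite -(vtx_pos x) eq_xy vtx_pos. Qed.

Lemma adjE x y : e x y = ((pos x).+1 == pos y) || ((pos y).+1 == pos x).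
Proof. by rewrite -{1}(idxK x) -{1}(idxK y) adj_v. Qed.

Lemma adj_sym : symmetric e.
Proof. by move=> x y; rewrite !adjE orbC. Qed.

Lemma adj_vtx k : k.+1 < n -> e (vtx k) (vtx k.+1).
Proof. by move=> lt_kn; rewrite adjE !pos_vtx ?eqxx //; lia. Qed.

Definition pos_convex (C : {set T}) : Prop :=
  forall x y z, pos x <= pos z <= pos y -> x \in C -> y \in C -> z \in C.

Lemma connect_convex C : pos_convex C -> induced_connected e C.
Proof.
move=> convC; set r := fun a b => [&& e a b, a \in C & b \in C].
have r_sym : symmetric r by move=> a b; rewrite /r adj_sym (andbC (a \in C)).
have connect_vtx d i : i + d < n -> vtx i \in C -> vtx (i + d) \in C ->
    connect r (vtx i) (vtx (i + d)).
  elim: d i => [|d IH] i lt_n Ci Cid; first by rewrite addn0.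
  have Ci1 : vtx i.+1 \in C.
    by apply: convC Ci Cid; rewrite !pos_vtx //; lia.
  have r_step : r (vtx i) (vtx i.+1) by rewrite /r adj_vtx ?Ci ?Ci1 //; lia.
  rewrite -addSnnS in lt_n Cid *.
  exact: connect_trans (connect1 r_step) (IH _ lt_n Ci1 Cid).
have connect_le x y : pos x <= pos y -> x \in C -> y \in C -> connect r x y.
  move=> le_xy; rewrite -(vtx_pos x) -(vtx_pos y) -(subnKC le_xy).
  by apply: connect_vtx; rewrite subnKC ?pos_lt.
move=> x y Cx Cy; case: (leqP (pos x) (pos y)) => [le_xy|/ltnW le_yx].
  exact: connect_le.
by rewrite sym_connect_sym //; apply: connect_le.
Qed.

Lemma adj_connected x y : connect e x y.
Proof.
have convT : pos_convex setT by move=> *; apply: in_setT.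
apply: connect_sub (connect_convex convT (in_setT x) (in_setT y)).
by move=> a b /andP [ab _]; apply: connect1.
Qed.

Lemma dist_le x y m : walkb e x y m -> m < n -> dist e x y <= m.
Proof.
move=> wm lt_mn; apply: (@bigmin_le _ _ _ _ _ (Ordinal lt_mn)) => //.
exact: mem_index_enum.
Qed.

Lemma dist_lt x y : dist e x y < n.
Proof.
have /connectP [p p_e ->] := adj_connected x y.
have [q q_e uniq_xq _] := shortenP p_e.
have size_q : size q < n.
  by have := max_card (mem (x :: q)); rewrite (card_uniqP uniq_xq).
apply: leq_ltn_trans (dist_le _ size_q) size_q.
by apply/existsP; exists (in_tuple q); rewrite q_e eqxx.
Qed.

Lemma pos_last_le x p : path e x p -> pos (last x p) <= pos x + size p.
Proof.
elim: p x => [|y p IH] x /=; first by rewrite addn0.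
by case/andP; rewrite adjE => xy /IH; case/orP: xy => /eqP; lia.
Qed.

Lemma dist_ge x y : pos y - pos x <= dist e x y.
Proof.
apply: (big_ind (fun d => pos y - pos x <= d)).
- by have := pos_lt y; rewrite /n; lia.
- by move=> a b le_a le_b; rewrite leq_min le_a le_b.
- move=> m /existsP [p /andP [p_e /eqP <-]].
  by have := pos_last_le p_e; rewrite size_tuple; lia.
Qed.

Lemma diamE : diam e = n.-1.
Proof.
apply/eqP; rewrite eqn_leq; apply/andP; split.
  apply/bigmax_leqP => x _; apply/bigmax_leqP => y _.
  by rewrite -ltnS prednK ?dist_lt.
apply: leq_trans (leq_bigmax (vtx 0)); apply: leq_trans (leq_bigmax (vtx n.-1)).
by apply: leq_trans (dist_ge _ _); rewrite !pos_vtx; lia.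
Qed.

Definition cut_side (u : T) (k : nat) : {set T} :=
  [set x | (pos x <= k) == (pos u <= k)].

Definition cut_system : {set {set T}} :=
  [set cut_side u k | u : T, k : 'I_n.-1].

Lemma mem_cut_side x u k : (x \in cut_side u k) = ((pos x <= k) == (pos u <= k)).
Proof. by rewrite inE. Qed.

Lemma cut_side_convex u k : pos_convex (cut_side u k).
Proof.
move=> x y z le_xzy; rewrite !mem_cut_side.
by case: (pos u <= k); case: leqP; case: leqP; case: leqP => //=; lia.
Qed.

Lemma cut_side_separates u j k : j.+1 < n ->
  ((vtx j \in cut_side u k) != (vtx j.+1 \in cut_side u k)) = (j == k).
Proof.
move=> lt_jn; rewrite !mem_cut_side (pos_vtx (ltnW lt_jn)) (pos_vtx lt_jn).
by case: (pos u <= k); case: (leqP j k); case: (leqP j.+1 k); case: eqP => //=; lia.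
Qed.

Lemma cut_side_inj u : injective (fun k : 'I_n.-1 => cut_side u k).
Proof.
move=> k k' /= eq_kk'; apply: val_inj; apply/eqP.
have lt_kn : k.+1 < n by have := ltn_ord k; lia.
by rewrite -(cut_side_separates u k' lt_kn) -eq_kk' cut_side_separates.
Qed.

Lemma cat_cut_system u : Defs.cat cut_system u = [set cut_side u k | k : 'I_n.-1].
Proof.
apply/setP => C; rewrite inE; apply/andP/imsetP.
  case=> /imset2P [w k _ _ ->]; rewrite mem_cut_side => /eqP side_u.
  by exists k => //; apply/setP => x; rewrite !mem_cut_side side_u.
case=> k _ ->; split; last by rewrite mem_cut_side.
by apply/imset2P; exists u k.
Qed.

Lemma memdim_cut_system : memdim cut_system = n.-1.
Proof.
have card_cat u : #|Defs.cat cut_system u| = n.-1.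
  by rewrite cat_cut_system card_imset ?card_ord //; apply: cut_side_inj.
apply/eqP; rewrite eqn_leq; apply/andP; split.
  by apply/bigmax_leqP => u _; rewrite card_cat.
by rewrite -(card_cat (vtx 0)) (leq_bigmax (vtx 0)).
Qed.

Lemma cut_system_connected : internally_connected e cut_system.
Proof.
by move=> C /imset2P [u k _ _ ->]; apply/connect_convex/cut_side_convex.
Qed.

Lemma cut_system_shattered : shattered e cut_system.
Proof.
move=> s t neq_st; have ps_lt := pos_lt s; have pt_lt := pos_lt t.
have neq_pos : pos s != pos t by apply: contra neq_st => /eqP/pos_inj ->.
have cut_mem u (k : 'I_n.-1) : cut_side u k \in cut_system.
  by apply/imset2P; exists u k.
case: (ltngtP (pos s) (pos t)) => [lt_st|lt_ts|]; last by move/eqP: neq_pos.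
- have lt_k : pos s < n.-1 by lia.
  set u := vtx (pos s).+1; exists u, (cut_side u (Ordinal lt_k)).
  have pos_u : pos u = (pos s).+1 by rewrite pos_vtx //; lia.
  rewrite inE !mem_cut_side adjE pos_u /= eqxx ltnn leqnn.
  split=> //; first exact: (cut_mem u (Ordinal lt_k)).
  by rewrite eqbF_neg -ltnNge.
- have lt_k : (pos s).-1 < n.-1 by lia.
  set u := vtx (pos s).-1; exists u, (cut_side u (Ordinal lt_k)).
  have pos_u : pos u = (pos s).-1 by rewrite pos_vtx //; lia.
  rewrite inE !mem_cut_side adjE pos_u /= prednK ?eqxx ?orbT ?leqnn; last lia.
  split=> //; first exact: (cut_mem u (Ordinal lt_k)).
    by rewrite eqb_id; lia.
  by rewrite eqb_id -ltnNge; lia.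
Qed.

End PathGraph.

Theorem lemma4 (T : finType) (e : rel T) :
  is_path_graph e ->
  exists S : {set {set T}},
    [/\ shattered e S, internally_connected e S & memdim S = diam e].
Proof.
case=> n_gt0 [v [[idx vK idxK] adj_v]].
exists (cut_system idx); split.
- exact: (cut_system_shattered n_gt0 vK idxK adj_v).
- exact: (cut_system_connected n_gt0 vK idxK adj_v).
- by rewrite (memdim_cut_system n_gt0 vK) (diamE n_gt0 vK idxK adj_v).
Qed.
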